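(* Let $P(z) \in \mathbb{C}[z, z^{-1}]$ be a Laurent polynomial and let $A \subseteq [0,1]$ be a closed set such that $P(e^{2\pi i t}) \neq 0$ for all $t \in A$. Then \[ \lim_{k\to\infty} \frac{1}{k!} \int_A \log^k \left|P\left(e^{2\pi i t}\right)\right| \, dt = 0. \]
   Context: $\log^k x$ means $(\log x)^k$; the integral is with respect to Lebesgue measure. *)

From HB Require Import structures.
From mathcomp Require Import all_boot all_order all_algebra.
From mathcomp Require Import all_classical all_reals all_analysis.
From mathcomp Require Import complex.
Set Implicit Arguments. Unset Strict Implicit. Unset Printing Implicit Defensive.
Import Order.TTheory GRing.Theory Num.Theory numFieldNormedType.Exports.
Local Open Scope ring_scope.

(* A Laurent polynomial P in C[z, z^-1] is represented as z^{-m} * Q(z)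
   with m : nat and Q : {poly C}; every Laurent polynomial has this form. *)
Definition laurent_eval (R : rcfType) (m : nat) (Q : {poly R[i]}) (z : R[i]) : R[i] :=
  z ^- m * Q.[z].

Definition e2pi (R : realType) (t : R) : R[i] :=
  (cos (2 * pi * t) +i* sin (2 * pi * t))%C.

Definition cabs (R : rcfType) (w : R[i]) : R := Normc.normc w.

From HB Require Import structures.
From mathcomp Require Import all_boot all_order all_algebra.
From mathcomp Require Import all_classical all_reals all_analysis.
From mathcomp Require Import measurable_realfun complex.
Import Order.TTheory GRing.Theory Num.Theory numFieldNormedType.Exports.
Local Open Scope classical_set_scope.
Local Open Scope ring_scope.

(* On the compact set A the function t |-> |P(e^{2 pi i t})| is continuous and
   positive, so |log |P|| is bounded there by some K. The k-th integral is then
   at most K^k |A| in absolute value, and K^k / k!, the terms of the series of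
   exp K, tend to 0. *)

Section integral_powers.
Context {d} {T : measurableType d} {R : realType}.
Variable mu : {measure set T -> \bar R}.
Context {A : set T} {f : T -> R} {K : R}.
Hypotheses (mA : measurable A) (mf : measurable_fun A f).
Hypotheses (K0 : 0 <= K) (fK : forall t, A t -> `|f t| <= K).

Lemma abse_integral_pow_le k :
  (`| \int[mu]_(t in A) (f t ^+ k)%:E | <= (K ^+ k)%:E * mu A)%E.
Proof.
have mfk : measurable_fun A (fun t => (f t ^+ k)%:E : \bar R).
  by apply/measurable_EFinP; exact: measurable_funX.
rewrite -integral_cst //; apply: le_trans (le_abse_integral mu mA mfk) _.
apply: ge0_le_integral => //.
- exact: measurableT_comp mfk.
- by move=> t At; rewrite abse_EFin lee_fin normrX lerXn2r ?nnegrE ?fK.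
Qed.

Hypothesis muA : (mu A < +oo)%E.

Lemma cvg_integral_pow_div_fact :
  (fun k => (k`!%:R^-1)%:E * \int[mu]_(t in A) (f t ^+ k)%:E)%E @ \oo --> 0%:E.
Proof.
set a := fine (mu A).
have muAE : mu A = a%:E by rewrite fineK // ge0_fin_numE.
have int_bound k : exists2 x : R,
    (\int[mu]_(t in A) (f t ^+ k)%:E = x%:E)%E & `|x| <= K ^+ k * a.
  have := abse_integral_pow_le k; rewrite muAE -EFinM.
  by case: (\int[mu]_(t in A) _)%E => [x| |] //=; rewrite lee_fin => ?; exists x.
have ba0 : (fun k => exp_coeff K k * a) @ \oo --> 0.
  by rewrite -(mul0r a); exact: cvgM (cvg_exp_coeff K) (cvg_cst a).
apply: (@squeeze_cvge _ _ _ R (fun k => (- (exp_coeff K k * a))%:E) _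
                               (fun k => (exp_coeff K k * a)%:E)).
- apply: nearW => k; have [x -> xK] := int_bound k.
  rewrite -EFinM !lee_fin -ler_norml normrM ger0_norm ?invr_ge0 //.
  by rewrite /exp_coeff /= mulrAC [leRHS]mulrC ler_wpM2l ?invr_ge0.
- apply: cvg_EFin; first exact: nearW.
  by rewrite /comp /= -oppr0; exact: cvgN ba0.
- by apply: cvg_EFin; first exact: nearW.
Qed.
End integral_powers.

Lemma continuous_horner_comp (K : numFieldType) (T : topologicalType)
    (p : {poly K}) (f : T -> K) (t : T) :
  {for t, continuous f} -> {for t, continuous (fun x => p.[f x])}.
Proof.
move=> cf; elim/poly_ind: p => [|p c IH].
  rewrite (_ : (fun x => _) = cst 0); first exact: cvg_cst.
  by apply/funext => x; rewrite horner0.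
rewrite (_ : (fun x => _) = (fun x => p.[f x] * f x + c)).
  by apply: cvgD; [apply: cvgM | exact: cvg_cst].
by apply/funext => x; rewrite hornerMXaddC.
Qed.

Section complex_continuity.
Local Open Scope complex_scope.
Context {R : realType}.
Local Notation C := (R[i] : numFieldType).

Lemma normc_real (a : R) : `|a%:C| = `|a|%:C :> R[i].
Proof. by rewrite normc_def /= expr0n /= addr0 sqrtr_sqr. Qed.

Lemma normc_cabs (z : R[i]) : `|z| = (cabs z)%:C.
Proof. by case: z. Qed.

Lemma continuous_real_complex (T : topologicalType) (f : T -> R) (t : T) :
  {for t, continuous f} -> {for t, continuous (fun x => (f x)%:C : C)}.
Proof.
move=> /cvgrPdist_lt cf; apply/cvgrPdist_lt => e e0.
move: (e0); rewrite ltcE /= => /andP[/eqP Ie Re0].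
apply: filterS (cf _ Re0) => x hx.
by rewrite -rmorphB normc_real ltcE /= -Ie eqxx.
Qed.

Lemma continuous_cabs : continuous (fun z : C => cabs z).
Proof.
move=> z; apply/(@cvgrPdist_lt _ _ _ _ (nbhs_filter z)) => e e0.
have := (@cvgrPdist_lt _ _ _ _ (nbhs_filter z) id z).1 (@cvg_id _ (nbhs z)) e%:C.
rewrite ltcR => /(_ e0).
apply: filterS => w; rewrite -ltcR; apply: le_lt_trans.
have := ler_dist_dist z w.
by rewrite [`|z|]normc_cabs [`|w|]normc_cabs -rmorphB normc_real.
Qed.

Lemma cabs_e2pi (t : R) : cabs (e2pi t) = 1.
Proof. by rewrite /cabs /e2pi /= cos2Dsin2 sqrtr1. Qed.

Lemma e2pi_neq0 (t : R) : e2pi t != 0.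
Proof. by rewrite -normr_eq0 normc_cabs cabs_e2pi oner_eq0. Qed.

Lemma cabs_gt0 (z : R[i]) : z != 0 -> 0 < cabs z.
Proof.
by move=> z0; rewrite -ltcR -normc_cabs normr_gt0.
Qed.

Lemma continuous_e2pi : continuous (fun t => e2pi t : C).
Proof.
have c2pi (g : R -> R) : continuous g -> continuous (fun t => g (2 * pi * t)).
  move=> cg t; apply: continuous_comp; last exact: cg.
  by apply: cvgM; [exact: cvg_cst | exact: cvg_id].
move=> t; rewrite (_ : (fun t => _) =
    (fun t => (cos (2 * pi * t))%:C + 'i * (sin (2 * pi * t))%:C)); last first.
  by apply/funext => s; rewrite {1}[e2pi s]complexE.
apply: cvgD; first exact/continuous_real_complex/c2pi/continuous_cos.
apply: cvgM; first exact: cvg_cst.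
exact/continuous_real_complex/c2pi/continuous_sin.
Qed.

Lemma continuous_laurent_eval_e2pi m (Q : {poly R[i]}) :
  continuous (fun t => laurent_eval m Q (e2pi t) : C).
Proof.
move=> t; rewrite /laurent_eval (_ : (fun t => _) =
    (fun t => ('X^m : {poly R[i]}).[e2pi t]^-1 * Q.[e2pi t])); last first.
  by apply/funext => s; rewrite hornerXn.
apply: cvgM; last exact: continuous_horner_comp (continuous_e2pi t).
apply: cvgV; first by rewrite hornerXn expf_neq0 // e2pi_neq0.
exact: continuous_horner_comp (continuous_e2pi t).
Qed.

End complex_continuity.

Lemma compact_ln_bounded {T : topologicalType} {R : realType}
    {A : set T} {g : T -> R} :
  compact A -> continuous g -> (forall t, A t -> 0 < g t) ->
  exists2 K, 0 <= K & forall t, A t -> `|ln (g t)| <= K.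
Proof.
move=> cpA cg gpos.
have cAlng : {within A, continuous (fun t => ln (g t))}.
  apply: continuous_in_subspaceT => t /[1!inE] At.
  exact: continuous_comp (cg t) (continuous_ln (gpos t At)).
have [M [_ HM]] := compact_bounded (continuous_compact cAlng cpA).
exists (`|M| + 1) => [|t At]; first by rewrite addr_ge0.
apply: HM; last by exists t.
by rewrite (le_lt_trans (ler_norm M)) // ltrDl.
Qed.

Lemma lebesgue_measure_sub_itv_lty (R : realType) (a b : R) (A : set R) :
  measurable A -> A `<=` `[a, b] -> (@lebesgue_measure R A < +oo)%E.
Proof.
move=> mA sAab.
have lab : (@lebesgue_measure R `[a, b]%classic < +oo)%E.
  by rewrite lebesgue_measure_itv; case: ifP => _; exact: ltry.
apply: le_lt_trans lab.
exact: (@le_measure _ _ _ (@lebesgue_measure R) A `[a, b]%classic (mem_set mA)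
  (mem_set (measurable_itv _)) sAab).
Qed.

Theorem lemma1 (R : realType) (m : nat) (Q : {poly R[i]}) (A : set R) :
  closed A -> A `<=` `[0, 1]%classic ->
  (forall t, A t -> laurent_eval m Q (e2pi t) != 0) ->
  (fun k : nat => ((k`!%:R)^-1)%:E *
      \int[@lebesgue_measure R]_(t in A)
         ((ln (cabs (laurent_eval m Q (e2pi t)))) ^+ k)%:E)%E
    @ \oo --> 0%:E.
Proof.
move=> cA sA nz.
set g := fun t => cabs (laurent_eval m Q (e2pi t)).
have cg : continuous g.
  move=> t; apply: continuous_comp (continuous_laurent_eval_e2pi m Q t) _.
  exact: continuous_cabs.
have cpA : compact A := subclosed_compact cA (@segment_compact R 0 1) sA.
have [K K0 hK] := compact_ln_bounded cpA cg (fun t At => cabs_gt0 _ (nz t At)).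
have mA : measurable A := closed_measurable cA.
have mlng : measurable_fun A (fun t => ln (g t)).
  apply: measurableT_comp; first exact: measurable_ln.
  by apply: measurable_funTS; exact: continuous_measurable_fun.
apply: (@cvg_integral_pow_div_fact _ _ _ (@lebesgue_measure R) A
  (fun t => ln (g t)) K) => //.
exact: lebesgue_measure_sub_itv_lty sA.
Qed.
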